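(* Let $k$ be an algebraically closed field with $\operatorname{char}(k)\nmid(d+1)!$, $S=k[x_1,\dots,x_n]$, $\mathcal{D}=k[z_1,\dots,z_n]$, with the apolarity action $\mathcal{D}\times S\to S$, $F\circ g=F(\partial/\partial x_1,\dots,\partial/\partial x_n)\,g$. For $f\in S_{d+1}$, the apolar ideal $f^{\perp}=\{F\in\mathcal{D}\mid F\circ f=0\}$ has a minimal generator in degree $d+1$ if and only if there exists $g\in S_{d+1}$, not a scalar multiple of $f$, such that $\langle\nabla g\rangle\subset\langle\nabla f\rangle$.
   Context: $\langle\nabla f\rangle$ denotes the $k$-span of $\partial f/\partial x_1,\dots,\partial f/\partial x_n$ in $S_d$. *)

From HB Require Import structures.
From mathcomp Require Import all_boot all_order all_algebra.
From mathcomp Require Import mpoly.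
Set Implicit Arguments. Unset Strict Implicit. Unset Printing Implicit Defensive.
Import Order.TTheory GRing.Theory.
Local Open Scope ring_scope.

(* S = k[x_1..x_n] and D = k[z_1..z_n] are both modelled by {mpoly k[n]}. *)

Definition apolar (k : fieldType) (n : nat) (F g : {mpoly k[n]}) : {mpoly k[n]} :=
  \sum_(m <- msupp F) F@_m *: mderivm m g.

Definition in_apolar (k : fieldType) (n : nat) (f F : {mpoly k[n]}) : Prop :=
  apolar F f = 0.

Definition in_ideal_gen (k : fieldType) (n : nat)
  (P : {mpoly k[n]} -> Prop) (F : {mpoly k[n]}) : Prop :=
  exists (s : seq ({mpoly k[n]} * {mpoly k[n]})),
    (forall hG, hG \in s -> P hG.2) /\ F = \sum_(hG <- s) hG.1 * hG.2.

Definition has_min_gen_in_degree (k : fieldType) (n : nat)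
  (f : {mpoly k[n]}) (e : nat) : Prop :=
  exists F : {mpoly k[n]},
    [/\ F \is e.-homog, in_apolar f F &
      ~ in_ideal_gen (fun G => in_apolar f G /\ exists j, (j < e)%N /\ G \is j.-homog) F].

Definition grad_span_sub (k : fieldType) (n : nat) (g f : {mpoly k[n]}) : Prop :=
  forall i : 'I_n, exists c : 'I_n -> k,
    mderiv i g = \sum_(j < n) c j *: mderiv j f.

From HB Require Import structures.
From mathcomp Require Import all_boot all_order all_algebra.
From mathcomp Require Import ssrcomplements mpoly.
Import GRing.Theory.
Local Open Scope ring_scope.

Set Implicit Arguments. Unset Strict Implicit. Unset Printing Implicit Defensive.

(* The apolarity pairing [<F, h> := (F o h)(0) = sum_m F_m h_m m!] is perfect
   on forms of each degree e <= d+1, since char k does not divide (d+1)!: in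
   monomial coordinates it is diagonal with invertible entries.  So a form of
   degree e outside the span of finitely many forms is separated from them by
   a form orthogonal to all of them, and the orthogonal of a finite family is
   finitely spanned.
   If g is not in k f and <grad g> is in <grad f>, separate g from f by some
   F in f^perp of degree d+1; every element of f^perp of lower degree kills g,
   so F is not in the ideal they generate.
   Conversely the degree d+1 part of that ideal contains the x_j G with
   G in (f^perp)_d = <grad f>^perp, so a minimal generator F is separated from
   it by some g.  Then <G, d_j g> = <x_j G, g> = 0 puts d_j g in
   <grad f>^perp^perp = <grad f>, and <F, f> = 0 <> <F, g>. *)

Lemma nsubmx_separating_vector (k : fieldType) (m N : nat)
    (A : 'M[k]_(m, N)) (v : 'rV[k]_N) :
  ~~ (v <= A)%MS -> exists w : 'cV[k]_N, A *m w = 0 /\ (v *m w) 0 0 != 0.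
Proof.
rewrite submxE => vA.
have /existsP [c vc] : [exists c, (v *m cokermx A) 0 c != 0].
  apply: contraNT vA => /existsPn vc0; apply/eqP/rowP => c.
  by rewrite [RHS]mxE; apply/eqP/negPn/vc0.
exists (col c (cokermx A)); rewrite colE; split.
  by rewrite mulmxA mulmx_coker mul0mx.
by rewrite mulmxA -colE mxE.
Qed.

Lemma row_dotC (k : fieldType) (N : nat) (u v : 'rV[k]_N) :
  (u *m v^T) 0 0 = (v *m u^T) 0 0.
Proof. by rewrite -[u in LHS]trmxK -trmx_mul mxE. Qed.

Section Apolarity.
Variables (k : fieldType) (n : nat).
Implicit Types (F G g h p : {mpoly k[n]}) (m : 'X_{1..n}).

Lemma msize_dhomog e p : p \is e.-homog -> (msize p <= e.+1)%N.
Proof.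
move=> hp; rewrite msizeE; apply/bigmax_leqP_seq => m m_p _.
by rewrite (dhomog_mf hp m_p).
Qed.

Lemma mderivm_dhomog e m h :
  h \is e.-homog -> (mdeg m <= e)%N -> mderivm m h \is (e - mdeg m).-homog.
Proof.
move=> hh le_me; apply/dhomogP => m' /[!mcoeff_msupp]; apply: contraNeq => ne.
rewrite mcoeff_mderivm (dhomog_nemf_coeff hh) ?mul0rn //.
by apply: contra ne => /eqP <-; rewrite /= mdegD addKn.
Qed.

Lemma mderiv_dhomog e i p : p \is e.+1.-homog -> mderiv i p \is e.-homog.
Proof.
move=> hp; have := mderivm_dhomog (m := U_(i)) hp.
by rewrite mdeg1 subn1 mderivmU1m; apply.
Qed.

Lemma apolarwE K F h :
  (msize F <= K)%N -> apolar F h = \sum_(m : 'X_{1..n < K}) F@_m *: mderivm m h.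
Proof.
move=> le_FK; pose I : subFinType _ := 'X_{1..n < K}.
rewrite /apolar (big_mksub I) //=; first last.
- by move=> m /msize_mdeg_lt /leq_trans; apply.
- by rewrite msupp_uniq.
by rewrite big_rmcond //= => m /memN_msupp_eq0 ->; rewrite scale0r.
Qed.

Lemma apolar_is_linear F : linear (apolar F).
Proof.
move=> a g h; rewrite /apolar scaler_sumr -big_split; apply: eq_bigr => m _.
by rewrite linearP scalerDr !scalerA mulrC.
Qed.

HB.instance Definition _ F :=
  GRing.isLinear.Build k {mpoly k[n]} {mpoly k[n]} _ (apolar F) (apolar_is_linear F).

Lemma apolar_linear_l a F G h :
  apolar (a *: F + G) h = a *: apolar F h + apolar G h.
Proof.
pose K := (msize F + msize G)%N.
have leF : (msize F <= K)%N by rewrite leq_addr.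
have leG : (msize G <= K)%N by rewrite leq_addl.
have leFG : (msize (a *: F + G) <= K)%N.
  rewrite (leq_trans (msizeD_le _ _)) // geq_max leG andbT.
  exact: leq_trans (msizeZ_le _ _) leF.
rewrite !(apolarwE h leF, apolarwE h leG, apolarwE h leFG) scaler_sumr -big_split.
by apply: eq_bigr => m _; rewrite mcoeffD mcoeffZ scalerDl scalerA.
Qed.

Lemma apolar0l h : apolar 0 h = 0.
Proof. by rewrite /apolar msupp0 big_nil. Qed.

Lemma apolarDl F G h : apolar (F + G) h = apolar F h + apolar G h.
Proof. by have := apolar_linear_l 1 F G h; rewrite !scale1r. Qed.

Lemma apolarZl a F h : apolar (a *: F) h = a *: apolar F h.
Proof. by have := apolar_linear_l a F 0 h; rewrite !addr0 apolar0l addr0. Qed.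

Lemma apolar_suml (I : Type) (r : seq I) (P : pred I) (Fs : I -> {mpoly k[n]}) h :
  apolar (\sum_(i <- r | P i) Fs i) h = \sum_(i <- r | P i) apolar (Fs i) h.
Proof. exact: (big_morph _ (fun F G => apolarDl F G h) (apolar0l h)). Qed.

Lemma apolarX m h : apolar 'X_[m] h = mderivm m h.
Proof. by rewrite /apolar msuppX big_seq1 mcoeffX eqxx scale1r. Qed.

Lemma apolarXi i h : apolar 'X_i h = mderiv i h.
Proof. by rewrite apolarX mderivmU1m. Qed.

Lemma apolarM F G h : apolar (F * G) h = apolar F (apolar G h).
Proof.
rewrite {1}[F]mpolyE mulr_suml apolar_suml [in RHS]/apolar.
apply: eq_bigr => a _; rewrite -scalerAl apolarZl; congr (_ *: _).
rewrite {1}[G]mpolyE mulr_sumr apolar_suml linear_sum; apply: eq_bigr => b _.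
by rewrite -scalerAr apolarZl -mpolyXD apolarX linearZ addmC mderivmDm.
Qed.

Lemma apolar_mderiv i F h : apolar F (mderiv i h) = mderiv i (apolar F h).
Proof. by rewrite -apolarXi -apolarM mulrC apolarM apolarXi. Qed.

Lemma apolar_dhomog j e G h :
  G \is j.-homog -> h \is e.-homog -> (j <= e)%N -> apolar G h \is (e - j).-homog.
Proof.
move=> hG hh le_je; rewrite /apolar big_seq rpred_sum // => m /(dhomog_mf hG) dm.
by rewrite rpredZ // -dm mderivm_dhomog ?dm.
Qed.

Definition mfact m : nat := \prod_(i < n) (m i)`!.

Lemma mcoeff0_mderivm m h : (mderivm m h)@_0 = h@_m * (mfact m)%:R.
Proof.
rewrite mcoeff_mderivm addm0 mulr_natr; congr (_ *+ _).
by apply: eq_bigr => i _; rewrite ffactnn.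
Qed.

Definition apolar_pairing F h : k := (apolar F h)@_0.

Lemma apolar_pairingwE K F h : (msize F <= K)%N ->
  apolar_pairing F h = \sum_(m : 'X_{1..n < K}) F@_m * h@_m * (mfact m)%:R.
Proof.
move=> le_FK; rewrite /apolar_pairing (apolarwE _ le_FK) raddf_sum.
by apply: eq_bigr => m _ /=; rewrite mcoeffZ mcoeff0_mderivm mulrA.
Qed.

Lemma apolar_pairingC F h : apolar_pairing F h = apolar_pairing h F.
Proof.
pose K := maxn (msize F) (msize h).
rewrite !(apolar_pairingwE (K := K)) ?leq_maxl ?leq_maxr //.
by apply: eq_bigr => m _; rewrite [F@_m * _]mulrC.
Qed.

Lemma apolar_dhomog_pairing e F h : F \is e.-homog -> h \is e.-homog ->
  apolar F h = (apolar_pairing F h)%:MP.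
Proof.
move=> hF hh; apply: msize1_polyC.
by have := apolar_dhomog hF hh (leqnn e); rewrite subnn => /msize_dhomog.
Qed.

Lemma natr_fact_neq0 j e : (j <= e)%N -> e`!%:R != 0 :> k -> j`!%:R != 0 :> k.
Proof. by move=> /fact_split ->; rewrite natrM mulf_eq0 negb_or => /andP []. Qed.

Lemma natr_neq0_fact j e : (0 < j <= e)%N -> e`!%:R != 0 :> k -> j%:R != 0 :> k.
Proof.
move=> /dvdn_fact /dvdnP [q ->]; rewrite natrM mulf_eq0 negb_or.
by move=> /andP [].
Qed.

Lemma mfact_neq0 e m : (mdeg m <= e)%N -> e`!%:R != 0 :> k -> (mfact m)%:R != 0 :> k.
Proof.
move=> le_me he; rewrite natr_prod; apply/prodf_neq0 => i _.
apply: natr_fact_neq0 he; apply: leq_trans le_me.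
by rewrite mdegE (bigD1 i) //= leq_addr.
Qed.

Lemma dhomog_eq0_mderiv e p : (0 < e)%N -> e`!%:R != 0 :> k ->
  p \is e.-homog -> (forall i, mderiv i p = 0) -> p = 0.
Proof.
move=> e_gt0 he hp dp0; apply/mpolyP => m; rewrite mcoeff0.
have [dm|] := eqVneq (mdeg m) e; last exact: dhomog_nemf_coeff.
have [i mi_gt0] : exists i, (0 < m i)%N.
  apply/existsP; apply: contraTT e_gt0 => /existsPn m0.
  rewrite -leqNgt leqn0 -dm mdegE sum_nat_eq0; apply/forallP => i.
  by rewrite -leqn0 leqNgt m0.
have mE : m = (m - U_(i) + U_(i))%MM.
  apply/mnmP => j; rewrite mnmDE mnmBE mnm1E.
  by case: eqP => [<-|_]; rewrite ?subn0 ?addn0 // subnK.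
have := congr1 (mcoeff (m - U_(i))%MM) (dp0 i).
rewrite mcoeff_mderiv -mE mcoeff0 mnmBE mnm1E eqxx subn1 prednK // -mulr_natr.
move/eqP; rewrite mulf_eq0 (negbTE (natr_neq0_fact _ he)) ?orbF => [/eqP //|].
by rewrite mi_gt0 -dm mdegE (bigD1 i) //= leq_addr.
Qed.

End Apolarity.

Section Coordinates.
Variables (k : fieldType) (n e : nat).
Implicit Types (p q h : {mpoly k[n]}).
Local Notation N := #|{: 'X_{1..n < e.+1}}|.

Definition mnm_at (i : 'I_N) : 'X_{1..n} := val (enum_val i).

Lemma mnm_at_inj : injective mnm_at.
Proof. by move=> i j /val_inj /enum_val_inj. Qed.

Lemma mdeg_mnm_at i : (mdeg (mnm_at i) <= e)%N.
Proof. by rewrite /mnm_at; case: (enum_val i). Qed.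

Lemma big_mnm_at (V : nmodType) (G : 'X_{1..n} -> V) :
  \sum_(m : 'X_{1..n < e.+1}) G m = \sum_i G (mnm_at i).
Proof. exact: big_enum_val. Qed.

Definition coords p : 'rV[k]_N := \row_i p@_(mnm_at i).

Definition wcoords p : 'rV[k]_N := \row_i (p@_(mnm_at i) * (mfact (mnm_at i))%:R).

Definition dhomog_of_coords (x : 'rV[k]_N) : {mpoly k[n]} :=
  \sum_i ((mdeg (mnm_at i) == e)%:R * x 0 i) *: 'X_[mnm_at i].

Lemma wcoords_is_linear : linear wcoords.
Proof.
by move=> a p q; apply/rowP => i; rewrite !mxE mcoeffD mcoeffZ mulrDl mulrA.
Qed.

HB.instance Definition _ :=
  GRing.isLinear.Build k {mpoly k[n]} 'rV[k]_N _ wcoords wcoords_is_linear.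

Lemma dhomog_of_coords_is_linear : linear dhomog_of_coords.
Proof.
move=> a x y; rewrite /dhomog_of_coords scaler_sumr -big_split.
by apply: eq_bigr => i _ /=; rewrite !mxE mulrDr scalerDl mulrCA scalerA.
Qed.

HB.instance Definition _ :=
  GRing.isLinear.Build k 'rV[k]_N {mpoly k[n]} _ dhomog_of_coords
    dhomog_of_coords_is_linear.

Lemma dhomog_of_coords_dhomog x : dhomog_of_coords x \is e.-homog.
Proof.
rewrite rpred_sum // => i _; have [dm|] := eqVneq (mdeg (mnm_at i)) e.
  by rewrite rpredZ // dhomogX /= dm.
by rewrite mul0r scale0r rpred0.
Qed.

Lemma mcoeff_dhomog_of_coords x i :
  (dhomog_of_coords x)@_(mnm_at i) = (mdeg (mnm_at i) == e)%:R * x 0 i.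
Proof.
rewrite raddf_sum (bigD1 i) //= mcoeffZ mcoeffX eqxx mulr1 big1 ?addr0 //.
by move=> j ji /=; rewrite mcoeffZ mcoeffX (inj_eq mnm_at_inj) (negbTE ji) mulr0.
Qed.

Lemma coordsK p : p \is e.-homog -> dhomog_of_coords (coords p) = p.
Proof.
move=> hp; rewrite [RHS](mpolywE (msize_dhomog hp)).
rewrite (big_mnm_at (fun m => p@_m *: 'X_[m])).
apply: eq_bigr => i _; rewrite mxE; case: eqP => [_|/eqP ne]; first by rewrite mul1r.
by rewrite (dhomog_nemf_coeff hp ne) mulr0.
Qed.

Lemma apolar_pairing_coords p x : p \is e.-homog ->
  apolar_pairing p (dhomog_of_coords x) = (wcoords p *m x^T) 0 0.
Proof.
pose P m := p@_m * (dhomog_of_coords x)@_m * (mfact m)%:R.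
move=> hp; rewrite (apolar_pairingwE _ (msize_dhomog hp)) (big_mnm_at P) mxE.
apply: eq_bigr => i _; rewrite /P mcoeff_dhomog_of_coords !mxE.
case: eqP => [_|/eqP ne]; first by rewrite mul1r mulrAC.
by rewrite (dhomog_nemf_coeff hp ne) !mul0r.
Qed.

Lemma wcoords_inj p q : e`!%:R != 0 :> k ->
  p \is e.-homog -> q \is e.-homog -> wcoords p = wcoords q -> p = q.
Proof.
move=> he hp hq /rowP pq; rewrite -(coordsK hp) -(coordsK hq); congr dhomog_of_coords.
apply/rowP => i; have := pq i; rewrite !mxE; apply: mulIf.
exact: mfact_neq0 (mdeg_mnm_at i) he.
Qed.

Section Family.
Variables (I : finType) (p : I -> {mpoly k[n]}).
Hypothesis hp : forall r, p r \is e.-homog.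

Let A : 'M[k]_(#|I|, N) := \matrix_(r < #|I|) wcoords (p (enum_val r)).

Let rowA r : row (enum_rank r) A = wcoords (p r).
Proof. by rewrite rowK enum_rankK. Qed.

Lemma dhomog_span_or_separated q : e`!%:R != 0 :> k -> q \is e.-homog ->
  (exists c : I -> k, q = \sum_r c r *: p r) \/
  (exists h, [/\ h \is e.-homog, forall r, apolar_pairing (p r) h = 0
               & apolar_pairing q h != 0]).
Proof.
move=> he hq; have [/submxP [y qy]|] := boolP (wcoords q <= A)%MS.
  left; exists (fun r => y 0 (enum_rank r)); apply: wcoords_inj => //.
    by apply: rpred_sum => r _; apply/rpredZ/hp.
  rewrite qy mulmx_sum_row linear_sum (reindex _ (onW_bij _ (enum_val_bij I))) /=.
  by apply: eq_bigr => i _; rewrite enum_valK linearZ rowK.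
move=> /nsubmx_separating_vector [w [Aw qw]]; right; exists (dhomog_of_coords w^T).
split=> [|r|]; rewrite ?dhomog_of_coords_dhomog ?apolar_pairing_coords ?trmxK //.
by rewrite -rowA -row_mul Aw row0 mxE.
Qed.

Lemma dhomog_perp_spanned :
  exists (s : nat) (G : 'I_s -> {mpoly k[n]}),
    [/\ forall t, G t \is e.-homog,
        forall t r, apolar_pairing (G t) (p r) = 0
      & forall h, h \is e.-homog -> (forall r, apolar_pairing h (p r) = 0) ->
          exists c : 'I_s -> k, h = \sum_t c t *: G t].
Proof.
pose K := kermx A^T.
have dotA x r :
    (x *m A^T) 0 (enum_rank r) = apolar_pairing (p r) (dhomog_of_coords x).
  rewrite apolar_pairing_coords // row_dotC -rowA !mxE.
  by apply: eq_bigr => t _; rewrite !mxE.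
exists N, (fun t => dhomog_of_coords (row t K)); split.
- by move=> t; apply: dhomog_of_coords_dhomog.
- by move=> t r; rewrite apolar_pairingC -dotA -row_mul mulmx_ker row0 mxE.
move=> h hh hperp; have /submxP [y hy] : (coords h <= K)%MS.
  rewrite sub_kermx; apply/eqP/rowP => j; rewrite [RHS]mxE -(enum_valK j).
  by rewrite dotA coordsK // apolar_pairingC hperp.
exists (fun t => y 0 t); rewrite -(coordsK hh) hy mulmx_sum_row linear_sum.
by apply: eq_bigr => t _; rewrite linearZ.
Qed.

End Family.

End Coordinates.

Section Proposition.
Variables (k : fieldType) (n d : nat) (f : {mpoly k[n]}).
Hypotheses (hchar : (d.+1)`!%:R != 0 :> k) (hf : f \is d.+1.-homog).

Lemma apolar_eq0_pairing_grad G : G \is d.-homog ->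
  apolar G f = 0 <-> forall i, apolar_pairing G (mderiv i f) = 0.
Proof.
move=> hG; split=> [Gf i | Gf0].
  by rewrite /apolar_pairing apolar_mderiv Gf raddf0 mcoeff0.
have hGf : apolar G f \is 1.-homog.
  by have := apolar_dhomog hG hf (leqnSn d); rewrite subSnn.
apply: dhomog_eq0_mderiv hGf _ => // [|i]; first by rewrite oner_neq0.
by rewrite -apolar_mderiv (apolar_dhomog_pairing hG (mderiv_dhomog i hf)) Gf0 mpolyC0.
Qed.

(* [G o g] has positive degree and its partials are combinations of the
   [G o mderiv l f = mderiv l (G o f) = 0]. *)
Lemma apolar_low_degree_eq0 g G j : g \is d.+1.-homog -> grad_span_sub g f ->
  in_apolar f G -> G \is j.-homog -> (j < d.+1)%N -> apolar G g = 0.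
Proof.
move=> hg gf Gf hG lt_jd.
apply: (dhomog_eq0_mderiv (e := d.+1 - j)) (apolar_dhomog hG hg (ltnW lt_jd)) _.
- by rewrite subn_gt0.
- exact: natr_fact_neq0 (leq_subr _ _) hchar.
move=> i; rewrite -apolar_mderiv; have [c ->] := gf i.
by rewrite linear_sum big1 // => l _ /=; rewrite linearZ /= apolar_mderiv Gf raddf0 scaler0.
Qed.

Lemma min_gen_of_grad_span g : g \is d.+1.-homog -> ~ (exists c, g = c *: f) ->
  grad_span_sub g f -> has_min_gen_in_degree f d.+1.
Proof.
move=> hg g_f gf.
have [[c gc]|[F [hF Ff Fg]]] := dhomog_span_or_separated (fun _ : 'I_1 => hf) hchar hg.
  by case: g_f; exists (c ord0); rewrite gc big_ord1.
exists F; split=> //.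
  by rewrite /in_apolar (apolar_dhomog_pairing hF hf) apolar_pairingC (Ff ord0) mpolyC0.
move=> [s [hs defF]]; move: Fg; rewrite apolar_pairingC /apolar_pairing defF.
rewrite apolar_suml raddf_sum big_seq big1 ?eqxx // => -[H G] /hs /= [Gf [j [lt_jd hG]]].
by rewrite apolarM (apolar_low_degree_eq0 hg gf Gf hG lt_jd) raddf0 mcoeff0.
Qed.

Lemma grad_span_of_min_gen : has_min_gen_in_degree f d.+1 ->
  exists g, [/\ g \is d.+1.-homog, ~ (exists c, g = c *: f) & grad_span_sub g f].
Proof.
move=> [F [hF Ff F_low]].
have hdf i : mderiv i f \is d.-homog by apply: mderiv_dhomog.
have [s [G [hG GW Gspan]]] := dhomog_perp_spanned hdf.
have Gf t : in_apolar f (G t) by apply/(apolar_eq0_pairing_grad (hG t)).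
pose XG (it : 'I_n * 'I_s) := 'X_it.1 * G it.2.
have hXG it : XG it \is d.+1.-homog.
  by rewrite -add1n dhomogM // dhomogX /= mdeg1.
have [[c Fc]|[g [hg XGg Fg]]] := dhomog_span_or_separated hXG hchar hF.
  case: F_low; exists [seq (c it *: 'X_it.1, G it.2) | it <- enum {: 'I_n * 'I_s}].
  split=> [_ /mapP [it _ ->] /=|]; first by split; [exact: Gf | exists d; split].
  by rewrite big_map big_enum Fc; apply: eq_bigr => it _; rewrite scalerAl.
exists g; split=> // [[c gc]|j].
  by move: Fg; rewrite gc /apolar_pairing linearZ /= mcoeffZ Ff mcoeff0 mulr0 eqxx.
have hdg : mderiv j g \is d.-homog by apply: mderiv_dhomog.
have hd : d`!%:R != 0 :> k by apply: natr_fact_neq0 (leqnSn d) hchar.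
have [//|[h [hh hperp hgh]]] := dhomog_span_or_separated hdf hd hdg.
have [c hc] := Gspan h hh (fun i => etrans (apolar_pairingC _ _) (hperp i)).
move: hgh; rewrite apolar_pairingC hc /apolar_pairing apolar_suml raddf_sum.
rewrite big1 ?eqxx // => t _ /=.
rewrite apolarZl mcoeffZ apolar_mderiv -apolarXi -apolarM.
by move: (XGg (j, t)); rewrite /apolar_pairing /= => ->; rewrite mulr0.
Qed.

End Proposition.

Unset Implicit Arguments.

Theorem proposition3p9 (k : closedFieldType) (n d : nat) (f : {mpoly k[n]}) :
  ((d.+1)`!)%:R != 0 :> k ->
  f \is (d.+1).-homog ->
  (has_min_gen_in_degree f d.+1 <->
   exists g : {mpoly k[n]},
     [/\ g \is (d.+1).-homog, ~ (exists c : k, g = c *: f) & grad_span_sub g f]).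
Proof.
move=> hchar hf; split; first exact: grad_span_of_min_gen.
by move=> [g [hg g_f gf]]; apply: (min_gen_of_grad_span hchar hf hg).
Qed.
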